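(* Let $U$ be a nonempty finite set and $R\subseteq U\times U$ a serial and transitive relation, and let $h$ be the height function of the lattice $(Reg(U,R),\subseteq)$. Define $$\mathbf{I}(Reg(U,R);h)=\{X\subseteq U\mid h(Y)\ge |X\cap Y| \text{ for all } Y\in Reg(U,R)\}.$$ Then $\mathbf{I}(Reg(U,R);h)$ satisfies the independent set axioms of a matroid on $U$: (I1) $\emptyset\in\mathbf{I}$; (I2) if $I\in\mathbf{I}$ and $I'\subseteq I$ then $I'\in\mathbf{I}$; (I3) if $I_1,I_2\in\mathbf{I}$ and $|I_1|<|I_2|$, then there exists $e\in I_2\setminus I_1$ with $I_1\cup\{e\}\in\mathbf{I}$.
   Context: $R_s(x)=\{y\in U\mid xRy\}$. $R$ is serial if every $x$ has some $y$ with $xRy$; transitive in the usual sense. $\underline{R}(X)=\{x\in U\mid R_s(x)\subseteq X\}$, $\overline{R}(X)=\{x\in U\mid R_s(x)\cap X\neq\emptyset\}$. $X\subseteq U$ is regular if $X=\underline{R}(\overline{R}(X))$; $Reg(U,R)$ is the set of regular sets ordered by inclusion (its least element is $\emptyset$). For $A\in Reg(U,R)$, the height $h(A)$ is the length (number of elements minus one) of a maximal chain in the interval $[\emptyset,A]=\{B\in Reg(U,R)\mid B\subseteq A\}$ (all such maximal chains have the same length in this finite lattice). *)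

From mathcomp Require Import all_boot.
Set Implicit Arguments. Unset Strict Implicit. Unset Printing Implicit Defensive.

Section RoughDefs.
Variable U : finType.
Variable R : rel U.

Definition Rs (x : U) : {set U} := [set y | R x y].

Definition lowerR (X : {set U}) : {set U} := [set x | Rs x \subset X].

Definition upperR (X : {set U}) : {set U} := [set x | Rs x :&: X != set0].

Definition regular (X : {set U}) : bool := X == lowerR (upperR X).

Definition chain_in (A : {set U}) (C : {set {set U}}) : bool :=
  [forall B in C, regular B && (B \subset A)] &&
  [forall B in C, forall D in C, (B \subset D) || (D \subset B)].

Definition max_chain_in (A : {set U}) (C : {set {set U}}) : bool :=
  maxset (fun C' : {set {set U}} => chain_in A C') C.

(* height: length (= number of elements minus one) of a maximal chain in
   [set0, A]; all such chains have the same length, we take the max over them *)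
Definition height (A : {set U}) : nat :=
  \max_(C : {set {set U}} | max_chain_in A C) (#|C|).-1.

Definition indep (X : {set U}) : Prop :=
  forall Y : {set U}, regular Y -> #|X :&: Y| <= height Y.

End RoughDefs.

From mathcomp Require Import all_boot.
From mathcomp Require Import zify.
Set Implicit Arguments. Unset Strict Implicit. Unset Printing Implicit Defensive.

(* Let P be a family of subsets of a
      finite set, containing set0 and closed under intersection, and f a
      nat-valued function with f set0 = 0 such that any two members X, Y of P
      lie in a common member J with f J + f (X :&: Y) <= f X + f Y.  Then the
      sets X with #|X :&: Y| <= f Y for all Y in P satisfy (I1)-(I3): for a
      fixed independent I, the "tight" members (f Y <= #|I :&: Y|) are stable
      under this join, and if no e of I2 :\: I1 could be added to I1 then a
      single tight Y would cover I2 :\: I1, forcing #|I2| <= #|I1|.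

   Call z terminal if every successor of z is a predecessor of z, and let
      basin W be the set of points all of whose terminal successors lie in W.
      The regular sets are exactly the basins; hence they are closed under
      intersection, and basin (X :|: Y) is a regular upper bound of X and Y.
      The height of a regular A is the number of terminal classes Rs z
      (z terminal in A): that many plus one bounds every chain below A, and
      removing classes one at a time builds a chain of that length.  Counting
      classes, height is submodular along the join above.

   The theorem is the instance P := regular R, f := height R of part 1. *)

Section IntersectionFamilyMatroid.
Variables (T : finType) (P : pred {set T}) (f : {set T} -> nat).
Hypothesis P0 : P set0.
Hypothesis f0 : f set0 = 0.
Hypothesis PI : forall X Y, P X -> P Y -> P (X :&: Y).
Hypothesis Pjoin : forall X Y, P X -> P Y ->
  exists J, [/\ P J, X :|: Y \subset J & f J + f (X :&: Y) <= f X + f Y].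

Definition indep_fam (X : {set T}) : Prop := forall Y, P Y -> #|X :&: Y| <= f Y.

Lemma indep_famP (X : {set T}) :
  reflect (indep_fam X) [forall Y, P Y ==> (#|X :&: Y| <= f Y)].
Proof.
apply: (iffP forallP) => H Y; first by move=> /(implyP (H Y)).
exact/implyP/H.
Qed.

Lemma indep_fam0 : indep_fam set0.
Proof. by move=> Y _; rewrite set0I cards0. Qed.

Lemma indep_fam_sub (I I' : {set T}) :
  indep_fam I -> I' \subset I -> indep_fam I'.
Proof.
move=> hI sI Y PY; apply: leq_trans (hI Y PY).
exact/subset_leq_card/setSI.
Qed.

Definition tight (I Y : {set T}) : Prop := P Y /\ f Y <= #|I :&: Y|.

(* Tight sets are stable under the join: with J above X :|: Y,
   f J <= f X + f Y - f (X :&: Y) <= #|I :&: X| + #|I :&: Y| - #|I :&: X :&: Y|,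
   which is #|I :&: (X :|: Y)| <= #|I :&: J|. *)
Lemma tight_join (I X Y : {set T}) : indep_fam I -> tight I X -> tight I Y ->
  exists2 J, tight I J & X :|: Y \subset J.
Proof.
move=> hI [PX tX] [PY tY]; have [J [PJ sXYJ fJ]] := Pjoin PX PY.
exists J => //; split => //.
have tXY := hI _ (PI PX PY).
have cUI := cardsUI (I :&: X) (I :&: Y); rewrite -setIIr in cUI.
have sJ : #|(I :&: X) :|: (I :&: Y)| <= #|I :&: J|.
  by apply/subset_leq_card; rewrite -setIUr setIS.
lia.
Qed.

(* Iterating the join (starting from the tight set set0), finitely many tight
   sets are covered by one tight set. *)
Lemma tight_cover (I A : {set T}) : indep_fam I ->
  (forall e, e \in A -> exists2 Y, tight I Y & e \in Y) ->
  exists2 Y, tight I Y & A \subset Y.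
Proof.
move=> hI hA.
suff [Y tY sY] : exists2 Y, tight I Y & {subset enum A <= Y}.
  by exists Y => //; apply/subsetP => e eA; apply: sY; rewrite mem_enum.
have : {subset enum A <= A} by move=> e; rewrite mem_enum.
elim: (enum A) => [|e s IH] sA.
  by exists set0; first by split; rewrite ?f0 ?cards0.
have [Y1 t1 s1] : exists2 Y, tight I Y & {subset s <= Y}.
  by apply: IH => x xs; apply: sA; rewrite inE xs orbT.
have [Y2 t2 e2] := hA e (sA e (mem_head e s)).
have [J tJ /subsetP sJ] := tight_join hI t1 t2.
exists J => // x; rewrite inE => /predU1P [->|xs]; apply: sJ.
  by rewrite inE e2 orbT.
by rewrite inE s1.
Qed.

Lemma dependent_tight (I : {set T}) (e : T) :
  indep_fam I -> ~ indep_fam (e |: I) ->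
  exists2 Y, tight I Y & e \in Y.
Proof.
move=> hI ndep.
have : ~~ [forall Y, P Y ==> (#|(e |: I) :&: Y| <= f Y)].
  by apply/negP => /indep_famP.
rewrite negb_forall => /existsP [Y]; rewrite negb_imply -ltnNge.
case/andP => PY ltY; have leY := hI Y PY.
have sub : (e |: I) :&: Y \subset e |: (I :&: Y).
  apply/subsetP => x; rewrite !inE => /andP [/orP [->|xI] xY] //.
  by rewrite xI xY orbT.
case eY: (e \in Y).
  exists Y => //; split => //.
  have := subset_leq_card sub; rewrite cardsU1; case: (_ \notin _) => /=; lia.
suff : #|(e |: I) :&: Y| <= #|I :&: Y| by lia.
apply/subset_leq_card/subsetP => x; rewrite !inE.
by case/andP => /orP [/eqP ->|->]; rewrite ?eY.
Qed.

(* Counting: if one set tight for I1 covers I2 :\: I1 and I2 is independent,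
   then I2 is not larger than I1 (I2 :\: Y lies in I1 :\: Y). *)
Lemma tight_card (I1 I2 Y : {set T}) :
  indep_fam I2 -> tight I1 Y -> I2 :\: I1 \subset Y -> #|I2| <= #|I1|.
Proof.
move=> h2 [PY tY] sY; rewrite -(cardsID Y I2) -(cardsID Y I1).
apply: leq_add; first exact: leq_trans (h2 Y PY) tY.
apply/subset_leq_card/subsetP => x; rewrite !inE => /andP [xY xI2].
rewrite xY /=; apply: contraNT xY => xI1.
by apply: (subsetP sY); rewrite inE xI1.
Qed.

Lemma indep_fam_augment (I1 I2 : {set T}) :
  indep_fam I1 -> indep_fam I2 -> #|I1| < #|I2| ->
  exists2 e, e \in I2 :\: I1 & indep_fam (e |: I1).
Proof.
move=> h1 h2 lt12.
case: (boolP [exists e in I2 :\: I1,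
               [forall Y, P Y ==> (#|(e |: I1) :&: Y| <= f Y)]]).
  by case/exists_inP => e eI /indep_famP; exists e.
move=> /exists_inPn dep; exfalso.
have [Y tY sY] : exists2 Y, tight I1 Y & I2 :\: I1 \subset Y.
  apply: (tight_cover h1) => e eI; apply: (dependent_tight h1).
  by move/indep_famP; apply/negP; exact: dep.
by have := tight_card h2 tY sY; rewrite leqNgt lt12.
Qed.

End IntersectionFamilyMatroid.

Section RegularSets.
Variables (U : finType) (R : rel U).
Hypothesis hser : forall x : U, exists y : U, R x y.
Hypothesis htr : transitive R.

Lemma regular0 : regular R set0.
Proof.
apply/eqP/setP => x; rewrite !inE; symmetry; apply/negP.
have [y xy] := hser x.
by move=> /subsetP /(_ y); rewrite !inE xy setI0 eqxx => /(_ isT).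
Qed.

Definition Rclosed (X : {set U}) : Prop :=
  forall x y, x \in X -> R x y -> y \in X.

Lemma regular_closed (X : {set U}) : regular R X -> Rclosed X.
Proof.
move=> /eqP rX x y; rewrite rX !inE => /subsetP sx xy.
by apply/subsetP => w; rewrite inE => yw; apply: sx; rewrite inE (htr xy yw).
Qed.

(* Terminal points: every successor leads back, i.e. z lies in a final
   strongly connected class of R. *)
Definition Term : {set U} := [set z | [forall w, R z w ==> R w z]].

Lemma termP (z : U) : reflect (forall w, R z w -> R w z) (z \in Term).
Proof.
rewrite inE; apply: (iffP forallP) => H w; first by move=> /(implyP (H w)).
exact/implyP/H.
Qed.

Lemma term_refl (z : U) : z \in Term -> R z z.
Proof. by move=> /termP H; have [w zw] := hser z; exact: htr zw (H _ zw). Qed.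

(* All points after a terminal z have the same successors as z: Rs z is the
   terminal class of z. *)
Lemma Rs_term (z w : U) : z \in Term -> R z w -> Rs R w = Rs R z.
Proof.
move=> /termP H zw; apply/setP => v; rewrite !inE; apply/idP/idP => Hv.
  exact: htr zw Hv.
exact: htr (H _ zw) Hv.
Qed.

(* Every point reaches a terminal point: take a successor with the fewest
   successors. *)
Lemma term_exists (x : U) : exists2 z, z \in Term & R x z.
Proof.
have [y0 xy0] := hser x.
case: (arg_minnP (fun y => #|Rs R y|) xy0) => y xy ymin.
have [z yz] := hser y.
have sub w : R y w -> Rs R w = Rs R y.
  move=> yw; apply/eqP; rewrite eqEcard; apply/andP; split.
    by apply/subsetP => v; rewrite !inE => wv; exact: htr yw wv.
  by apply: ymin; exact: htr xy yw.
exists z; last exact: htr xy yz.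
apply/termP => v zv.
have : z \in Rs R v by rewrite (sub v (htr yz zv)) inE.
by rewrite inE.
Qed.

Definition tsucc (x : U) : {set U} := Term :&: Rs R x.

Definition basin (W : {set U}) : {set U} := [set x | tsucc x \subset W].

Lemma tsuccP (x z : U) : reflect (z \in Term /\ R x z) (z \in tsucc x).
Proof. by rewrite !inE; apply: andP. Qed.

Lemma tsucc_self (z : U) : z \in Term -> z \in tsucc z.
Proof. by move=> zT; apply/tsuccP; split; last exact: term_refl. Qed.

Lemma tsuccS (x y : U) : R x y -> tsucc y \subset tsucc x.
Proof.
move=> xy; apply/subsetP => z /tsuccP [zT yz].
by apply/tsuccP; split; last exact: htr xy yz.
Qed.

Lemma basinS (W W' : {set U}) : W \subset W' -> basin W \subset basin W'.
Proof.
by move=> sW; apply/subsetP => x; rewrite !inE => /subset_trans; apply.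
Qed.

Lemma basin_closed (W : {set U}) : Rclosed (basin W).
Proof. by move=> x y; rewrite !inE => sx /tsuccS /subset_trans; apply. Qed.

Lemma basin_idem (W : {set U}) : basin (basin W) = basin W.
Proof.
apply/setP => x; rewrite !inE; apply/subsetP/subsetP => sx z zx.
- have := sx z zx; rewrite inE => /subsetP; apply.
  by case/tsuccP: zx => zT _; exact: tsucc_self.
- case/tsuccP: zx => _ xz; rewrite inE.
  by apply/subsetP => v /(subsetP (tsuccS xz)); exact: sx.
Qed.

Lemma lower_upper_basin (X : {set U}) :
  Rclosed X -> lowerR R (upperR R X) = basin X.
Proof.
move=> clX; apply/setP => x; rewrite !inE; apply/subsetP/subsetP => sx z.
- case/tsuccP => zT xz; have := sx z; rewrite !inE => /(_ xz) /set0Pn [w].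
  rewrite !inE => /andP [zw wX].
  by apply: clX wX _; move/termP: zT; apply.
- rewrite !inE => xz; have [w wT zw] := term_exists z.
  apply/set0Pn; exists w; rewrite !inE zw /=.
  by apply: sx; apply/tsuccP; split; last exact: htr xz zw.
Qed.

Lemma basin_regular (W : {set U}) : regular R (basin W).
Proof.
by rewrite /regular lower_upper_basin ?basin_idem //; exact: basin_closed.
Qed.

Lemma regular_basin (X : {set U}) : regular R X -> basin X = X.
Proof.
move=> rX; rewrite -lower_upper_basin; last exact: regular_closed.
by apply/esym/eqP.
Qed.

Lemma regular_tsucc (X : {set U}) (x : U) :
  regular R X -> x \in X -> tsucc x \subset X.
Proof. by move=> rX; rewrite -{1}(regular_basin rX) inE. Qed.

Lemma regular_sub_basin (X W : {set U}) :
  regular R X -> X \subset W -> X \subset basin W.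
Proof.
move=> rX sXW; apply/subsetP => x xX.
by rewrite inE (subset_trans (regular_tsucc rX xX) sXW).
Qed.

Lemma regularI (X Y : {set U}) :
  regular R X -> regular R Y -> regular R (X :&: Y).
Proof.
move=> rX rY; suff -> : X :&: Y = basin (X :&: Y) by exact: basin_regular.
apply/setP => x; rewrite [in RHS]inE subsetI inE.
apply/andP/andP => [[xX xY]|[sX sY]]; first by rewrite !regular_tsucc.
by rewrite -(regular_basin rX) -(regular_basin rY) !inE.
Qed.

Definition tclasses (X : {set U}) : {set {set U}} := Rs R @: (X :&: Term).

Lemma tclassesS (X Y : {set U}) : X \subset Y -> tclasses X \subset tclasses Y.
Proof. by move=> sXY; apply/imsetS/setSI. Qed.

Lemma tclasses_reflect (X Y : {set U}) : regular R X -> regular R Y ->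
  tclasses X \subset tclasses Y -> X \subset Y.
Proof.
move=> rX rY sXY; apply/subsetP => x xX; rewrite -(regular_basin rY) inE.
apply/subsetP => z zx; have /tsuccP [zT _] := zx.
have zX : z \in X := subsetP (regular_tsucc rX xX) z zx.
have : Rs R z \in tclasses Y.
  by apply: (subsetP sXY); apply: imset_f; rewrite inE zX.
case/imsetP => w; rewrite inE => /andP [wY wT] ezw.
have : z \in Rs R w by rewrite -ezw inE term_refl.
by rewrite inE; apply: regular_closed wY.
Qed.

(* Comparable regular sets with equally many terminal classes are equal;
   this makes chains inject into class counts. *)
Lemma tclasses_eq (B D : {set U}) : regular R B -> regular R D ->
  B \subset D -> #|tclasses D| <= #|tclasses B| -> B = D.
Proof.
move=> rB rD sBD le; apply/eqP; rewrite eqEsubset sBD.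
apply: tclasses_reflect => //.
by have /eqP -> : tclasses B == tclasses D by rewrite eqEcard tclassesS.
Qed.

Lemma remove_class (A : {set U}) (z : U) : regular R A -> z \in A :&: Term ->
  [/\ regular R (basin (A :\: Rs R z)), basin (A :\: Rs R z) \proper A &
      tclasses (basin (A :\: Rs R z)) = tclasses A :\ Rs R z].
Proof.
move=> rA; rewrite inE => /andP [zA zT]; set A' := basin _.
split; first exact: basin_regular.
  apply/properP; split.
    by rewrite (subset_trans (basinS (subsetDl A (Rs R z)))) ?regular_basin.
  exists z => //; rewrite inE; apply/negP => /subsetP /(_ z (tsucc_self zT)).
  by rewrite !inE term_refl.
apply/setP => c; apply/imsetP/idP => [[u]|].
  rewrite inE => /andP [uA' uT] ->; move: uA'.
  rewrite !inE => /subsetP /(_ u (tsucc_self uT)).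
  rewrite !inE => /andP [uz uA]; apply/andP; split.
    apply: contra uz => /eqP e; suff : u \in Rs R z by rewrite inE.
    by rewrite -e inE term_refl.
  by apply: imset_f; rewrite inE uA uT.
rewrite !inE => /andP [cz /imsetP [u]]; rewrite inE => /andP [uA uT] ec.
exists u => //; rewrite inE uT andbT inE; apply/subsetP => v /tsuccP [vT uv].
rewrite !inE (regular_closed rA uA uv) andbT; apply: contra cz => zv.
by rewrite ec -(Rs_term uT uv) (Rs_term zT zv).
Qed.

Lemma chainP (A : {set U}) (C : {set {set U}}) : reflect
  ((forall B, B \in C -> regular R B /\ B \subset A) /\
   (forall B D, B \in C -> D \in C -> (B \subset D) || (D \subset B)))
  (chain_in R A C).
Proof.
apply: (iffP andP) => [[/forallP H1 /forallP H2]|[H1 H2]]; split.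
- by move=> B BC; move: (H1 B) => /implyP /(_ BC) /andP.
- move=> B D BC DC.
  by move: (H2 B) => /implyP /(_ BC) /forallP /(_ D) /implyP /(_ DC).
- by apply/forallP => B; apply/implyP => /H1 [-> ->].
- apply/forallP => B; apply/implyP => BC; apply/forallP => D; apply/implyP.
  exact: H2.
Qed.

(* Upper bound: a chain below A has at most #|tclasses A| + 1 members,
   since B |-> #|tclasses B| is injective on it. *)
Lemma chain_card_le (A : {set U}) (C : {set {set U}}) :
  regular R A -> chain_in R A C -> #|C| <= #|tclasses A|.+1.
Proof.
move=> rA /chainP [inC cmp].
pose rank (B : {set U}) : 'I_(#|tclasses A|).+1 := inord #|tclasses B|.
have le B : B \in C -> #|tclasses B| <= #|tclasses A|.
  by move=> /inC [_ sBA]; apply/subset_leq_card/tclassesS.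
have inj : {in C &, injective rank}.
  move=> B D BC DC /(congr1 val) /=; rewrite !inordK ?ltnS ?le // => e.
  have [[rB _] [rD _]] := (inC B BC, inC D DC).
  case/orP: (cmp B D BC DC) => s; first by apply: tclasses_eq; rewrite ?e.
  by apply/esym/tclasses_eq; rewrite ?e.
rewrite -(card_in_imset inj); apply: leq_trans (max_card _) _.
by rewrite card_ord.
Qed.

Lemma chain_extend (A A' : {set U}) (C : {set {set U}}) :
  A' \proper A -> regular R A -> chain_in R A' C ->
  chain_in R A (A |: C) /\ A \notin C.
Proof.
move=> /properP [sA' [z zA zA']] rA /chainP [inC cmp].
have sub B : B \in C -> B \subset A.
  by move=> /inC [_ sB]; apply: subset_trans sA'.
have AC : A \notin C.
  by apply/negP => /inC [_ /subsetP /(_ z zA)]; apply/negP.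
split=> //; apply/chainP; split.
  move=> B /setU1P [->|BC]; first by rewrite subxx.
  by have [rB _] := inC B BC; rewrite sub.
move=> B D /setU1P [->|BC] /setU1P [->|DC].
- by rewrite subxx.
- by rewrite sub ?orbT.
- by rewrite sub.
- exact: cmp.
Qed.

(* Lower bound: removing terminal classes one at a time gives a chain below A
   with #|tclasses A| + 1 members. *)
Lemma long_chain (A : {set U}) :
  regular R A -> exists2 C, chain_in R A C & #|tclasses A| < #|C|.
Proof.
have [n] := ubnP #|tclasses A|; elim: n A => // n IH A ltA rA.
case: (set_0Vmem (tclasses A)) => [->|[c cA]].
  exists [set A]; last by rewrite cards0 cards1.
  apply/chainP; split => [B|B D]; rewrite inE => /eqP ->.
    by rewrite subxx.
  by rewrite inE => /eqP ->; rewrite subxx.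
have /imsetP [z zAT ec] := cA; rewrite {c}ec in cA.
have [rA' pA' eA'] := remove_class rA zAT.
have [C' chC' ltC'] : exists2 C', chain_in R (basin (A :\: Rs R z)) C' &
    #|tclasses (basin (A :\: Rs R z))| < #|C'|.
  apply: IH rA'; move: ltA; rewrite eA' (cardsD1 (Rs R z)) cA.
  by rewrite ltn_add2l.
have [chC AC'] := chain_extend pA' rA chC'.
exists (A |: C') => //.
by rewrite cardsU1 AC' (cardsD1 (Rs R z)) cA -eA' ltn_add2l.
Qed.

Lemma height_eq (A : {set U}) : regular R A -> height R A = #|tclasses A|.
Proof.
move=> rA; apply/eqP; rewrite eqn_leq; apply/andP; split.
  apply/bigmax_leqP => C /maxsetp chC.
  by have := chain_card_le rA chC; case: #|C|.
have [C chC ltC] := long_chain rA.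
have [M maxM sCM] := maxset_exists chC.
apply: leq_trans (leq_bigmax_cond _ maxM).
have ltM : #|tclasses A| < #|M| := leq_trans ltC (subset_leq_card sCM).
by rewrite -ltnS (ltn_predK ltM).
Qed.

Lemma height0 : height R set0 = 0.
Proof. by rewrite height_eq ?regular0 // /tclasses set0I imset0 cards0. Qed.

(* basin (X :|: Y) is a regular upper bound of X and Y whose classes are
   among those of X or Y, so height satisfies the submodular inequality. *)
Lemma regular_join (X Y : {set U}) : regular R X -> regular R Y ->
  exists J, [/\ regular R J, X :|: Y \subset J &
    height R J + height R (X :&: Y) <= height R X + height R Y].
Proof.
move=> rX rY; exists (basin (X :|: Y)); split; first exact: basin_regular.
  by rewrite subUset !regular_sub_basin ?subsetUl ?subsetUr.
rewrite !height_eq ?regularI ?basin_regular // -(cardsUI (tclasses X)).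
apply: leq_add; apply: subset_leq_card.
  apply/subsetP => c /imsetP [z]; rewrite inE => /andP [zJ zT] ->.
  move: zJ; rewrite inE => /subsetP /(_ z (tsucc_self zT)).
  by rewrite !inE => /orP [zX|zY]; apply/orP; [left|right]; apply: imset_f;
    rewrite inE ?zX ?zY.
by rewrite subsetI !tclassesS ?subsetIl ?subsetIr.
Qed.

End RegularSets.

Unset Implicit Arguments.
Set Strict Implicit.
Set Printing Implicit Defensive.

Theorem proposition2 (U : finType) (R : rel U)
  (hU : 0 < #|U|)
  (hser : forall x : U, exists y : U, R x y)
  (htr : transitive R) :
  [/\ indep R set0,
      (forall I I' : {set U}, indep R I -> I' \subset I -> indep R I') &
      (forall I1 I2 : {set U}, indep R I1 -> indep R I2 -> #|I1| < #|I2| ->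
         exists2 e, e \in I2 :\: I1 & indep R (e |: I1))].
Proof.
split.
- exact: (@indep_fam0 U (regular R) (height R)).
- exact: (@indep_fam_sub U (regular R) (height R)).
- exact: (indep_fam_augment (regular0 hser) (height0 hser htr)
                            (regularI hser htr) (regular_join hser htr)).
Qed.
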